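(* Assume the standing assumptions and additionally that every $\sigma_l$ is differentiable everywhere, and let $\Omega=\Omega_{out}$ with $\lambda>0$, $1\le p<\infty$. Then for every $B\in\mathbb{R}$, the set of dimension tuples $\mathbf{d}=(d_1,\dots,d_{L-1})$ for which there exists a proper $B$-local minimum $(\mathbf{d},\mathbf{W})$ of $E$ is bounded.
   Context: Network: for dimensions $d_0,\dots,d_L$ and weights $\mathbf{W}=(W_1,\dots,W_L)$, $W_l\in\mathbb{R}^{d_{l-1}\times d_l}$, define for a row vector $x\in\mathbb{R}^{d_0}$: $x_0=x$, $z_l=x_{l-1}W_l$, $x_l=\sigma_l.(z_l)$ (elementwise), $f(\mathbf{W},x)=x_L$; $d_0,d_L$ are fixed and $d_1,\dots,d_{L-1}$ vary. $E(\mathbf{d},\mathbf{W})=\frac{1}{|D|}\sum_{(x,y)\in D}e(f(\mathbf{W},x),y)+\Omega(\mathbf{W},\lambda,p)$ with $D$ a finite dataset of pairs $(x,y)$, $x\in\mathbb{R}^{d_0}$, $y\in Y$. $\Omega_{in}(\mathbf{W},\lambda,p)=\lambda\sum_{l=1}^L\sum_{j=1}^{d_l}\|(W_l(i,j))_{i}\|_p$, $\Omega_{out}(\mathbf{W},\lambda,p)=\lambda\sum_{l=1}^L\sum_{i=1}^{d_{l-1}}\|(W_l(i,j))_{j}\|_p$. Standing assumptions: each $\sigma_l$ is left- and right-differentiable everywhere, and there are functions $b_{1,l},b_{2,l}:\mathbb{R}_{\ge0}\to\mathbb{R}_{\ge0}$ with $|\sigma_l(s)|\le b_{1,l}(S)|s|$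 and $|\sigma_l^{\leftarrow}(s)|,|\sigma_l^{\rightarrow}(s)|\le b_{2,l}(S)$ whenever $|s|\le S$; $e$ is nonnegative, differentiable in its first argument, and there is $b_3$ with $e(v,y)\le S\Rightarrow\|\partial e(v,y)/\partial v\|_\infty\le b_3(S)$. Definitions: The fan-in of hidden unit $j$ in layer $l$ ($1\le l\le L-1$) is column $j$ of $W_l$; its fan-out is row $j$ of $W_{l+1}$. A pair $(\mathbf{d},\mathbf{W})$ is a local minimum of $E$ if $\mathbf{W}$ is a local minimum of $E(\mathbf{d},\cdot)$ with $\mathbf{d}$ fixed; it is $B$-locally minimal if moreover $E(\mathbf{d},\mathbf{W})\le B$. The proper dimensionality of $\mathbf{W}$ is the dimension tuple obtained by deleting all hidden units whose fan-in or fan-out (or both) is the zero vector; $(\mathbf{d},\mathbf{W})$ is proper if $\mathbf{d}$ equals the proper dimensionality of $\mathbf{W}$. A proper $B$-local minimum is a $B$-locally minimal local minimum that is proper. *)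

From Stdlib Require Import Reals List Arith.
Open Scope R_scope.

(** Vectors in R^n are represented as [nat -> R], only indices [< n] matter. *)

Fixpoint sumR (n : nat) (f : nat -> R) : R :=
  match n with O => 0 | S m => sumR m f + f m end.

Fixpoint maxabs (n : nat) (h : nat -> R) : R :=
  match n with O => 0 | S m => Rmax (maxabs m h) (Rabs (h m)) end.

Definition vec (n : nat) (v : nat -> R) : Prop := forall i, (n <= i)%nat -> v i = 0.

Definition rpow (x y : R) : R := if Rlt_dec 0 x then Rpower x y else 0.

Definition pnorm (n : nat) (p : R) (w : nat -> R) : R :=
  rpow (sumR n (fun j => rpow (Rabs (w j)) p)) (/ p).

Definition right_deriv (f : R -> R) (x a : R) : Prop :=
  forall eps, 0 < eps -> exists delta, 0 < delta /\
    forall h, 0 < h < delta -> Rabs ((f (x + h) - f x) / h - a) < eps.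
Definition left_deriv (f : R -> R) (x a : R) : Prop :=
  forall eps, 0 < eps -> exists delta, 0 < delta /\
    forall h, - delta < h < 0 -> Rabs ((f (x + h) - f x) / h - a) < eps.

Definition frechet (n : nat) (f : (nat -> R) -> R) (v g : nat -> R) : Prop :=
  forall eps, 0 < eps -> exists delta, 0 < delta /\
    forall h, vec n h -> maxabs n h < delta ->
      Rabs (f (fun i => v i + h i) - f v - sumR n (fun i => g i * h i))
        <= eps * maxabs n h.

(** Network.  d : nat -> nat gives d_0,...,d_L; W l i j = W_l(i,j) (1 <= l <= L);
    sigma l = sigma_l.  [fwd sigma d W x l] is x_l (padded with zeros). *)
Fixpoint fwd (sigma : nat -> R -> R) (d : nat -> nat) (W : nat -> nat -> nat -> R)
  (x : nat -> R) (l : nat) : nat -> R :=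
  match l with
  | O => fun i => if Nat.ltb i (d O) then x i else 0
  | S k => fun j => if Nat.ltb j (d (S k))
                    then sigma (S k) (sumR (d k) (fun i => fwd sigma d W x k i * W (S k) i j))
                    else 0
  end.

Definition netf (L : nat) (sigma : nat -> R -> R) (d : nat -> nat)
  (W : nat -> nat -> nat -> R) (x : nat -> R) : nat -> R := fwd sigma d W x L.

Definition Omega_out (L : nat) (d : nat -> nat) (W : nat -> nat -> nat -> R) (lam p : R) : R :=
  lam * sumR L (fun k => sumR (d k) (fun i => pnorm (d (S k)) p (fun j => W (S k) i j))).

Definition Eobj {Y : Type} (L : nat) (sigma : nat -> R -> R) (e : (nat -> R) -> Y -> R)
  (D : list ((nat -> R) * Y)) (lam p : R) (d : nat -> nat) (W : nat -> nat -> nat -> R) : R :=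
  / INR (length D) *
    fold_right (fun xy acc => e (netf L sigma d W (fst xy)) (snd xy) + acc) 0 D
  + Omega_out L d W lam p.

Definition local_min {Y : Type} (L : nat) (sigma : nat -> R -> R) (e : (nat -> R) -> Y -> R)
  (D : list ((nat -> R) * Y)) (lam p : R) (d : nat -> nat) (W : nat -> nat -> nat -> R) : Prop :=
  exists eps, 0 < eps /\
    forall W' : nat -> nat -> nat -> R,
      (forall l i j, (1 <= l <= L)%nat -> (i < d (l - 1))%nat -> (j < d l)%nat ->
         Rabs (W' l i j - W l i j) < eps) ->
      Eobj L sigma e D lam p d W <= Eobj L sigma e D lam p d W'.

(** Hidden unit j of layer l (1 <= l <= L-1) is deleted in the proper dimensionality
    iff its fan-in (column j of W_l) or fan-out (row j of W_{l+1}) is zero. *)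
Definition fan_in_zero (d : nat -> nat) (W : nat -> nat -> nat -> R) (l j : nat) : Prop :=
  forall i, (i < d (l - 1))%nat -> W l i j = 0.
Definition fan_out_zero (d : nat -> nat) (W : nat -> nat -> nat -> R) (l j : nat) : Prop :=
  forall k, (k < d (S l))%nat -> W (S l) j k = 0.
Definition deleted_unit (d : nat -> nat) (W : nat -> nat -> nat -> R) (l j : nat) : Prop :=
  fan_in_zero d W l j \/ fan_out_zero d W l j.

(** (d, W) is proper: d equals the proper dimensionality of W, i.e. no hidden unit
    is deleted. *)
Definition proper (L : nat) (d : nat -> nat) (W : nat -> nat -> nat -> R) : Prop :=
  forall l j, (1 <= l <= L - 1)%nat -> (j < d l)%nat -> ~ deleted_unit d W l j.

Definition proper_B_local_min {Y : Type} (L : nat) (sigma : nat -> R -> R)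
  (e : (nat -> R) -> Y -> R) (D : list ((nat -> R) * Y)) (lam p B : R)
  (d : nat -> nat) (W : nat -> nat -> nat -> R) : Prop :=
  local_min L sigma e D lam p d W /\ Eobj L sigma e D lam p d W <= B /\ proper L d W.

From Stdlib Require Import Reals List Arith Lra Lia Classical FunctionalExtensionality ZArith.
Open Scope R_scope.

(* At a B-local minimum the regularizer is at most |B|, so every row of every weight matrix
   has p-norm at most |B|/lam; hence every fan-in has l1-norm at most |B|/lam and all
   activations on the data are bounded by constants that depend on B but not on the widths.
   Shrinking the fan-out of a hidden unit by a factor 1 - t lowers the regularizer by
   lam t ||fan-out||_p, which is positive by properness, while (by the mean value theorem
   through the later layers) the loss grows by at most C t ||fan-out||_p ||fan-in||_1.
   Local minimality therefore forces every fan-in to have l1-norm at least lam / C, so each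
   unit of layer l has an incoming weight of size at least lam / (C (d_(l-1) + 1)).  The
   p-th powers of these weights are paid for by the row-norm budget d_(l-1) (|B|/lam)^p,
   which bounds d_l in terms of d_(l-1); induction over the layers concludes. *)

(** * Finite sums and sup-norms *)

Lemma sumR_ext n f g : (forall i, (i < n)%nat -> f i = g i) -> sumR n f = sumR n g.
Proof.
  induction n as [|n IH]; intros H; simpl; [reflexivity|].
  rewrite IH by (intros; apply H; lia). rewrite H by lia. reflexivity.
Qed.

Lemma sumR_le n f g : (forall i, (i < n)%nat -> f i <= g i) -> sumR n f <= sumR n g.
Proof.
  induction n as [|n IH]; intros H; simpl; [lra|].
  assert (f n <= g n) by (apply H; lia).
  assert (sumR n f <= sumR n g) by (apply IH; intros; apply H; lia).
  lra.
Qed.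

Lemma sumR_const n c : sumR n (fun _ => c) = INR n * c.
Proof. induction n as [|n IH]; simpl sumR; [simpl; lra|]. rewrite IH, S_INR; lra. Qed.

Lemma sumR_nonneg n f : (forall i, (i < n)%nat -> 0 <= f i) -> 0 <= sumR n f.
Proof.
  intros H. replace 0 with (sumR n (fun _ => 0)) by (rewrite sumR_const; lra).
  now apply sumR_le.
Qed.

Lemma sumR_add n f g : sumR n (fun i => f i + g i) = sumR n f + sumR n g.
Proof. induction n as [|n IH]; simpl; [lra|]. rewrite IH; lra. Qed.

Lemma sumR_sub n f g : sumR n (fun i => f i - g i) = sumR n f - sumR n g.
Proof. induction n as [|n IH]; simpl; [lra|]. rewrite IH; lra. Qed.

Lemma sumR_scal n c f : sumR n (fun i => c * f i) = c * sumR n f.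
Proof. induction n as [|n IH]; simpl; [lra|]. rewrite IH; lra. Qed.

Lemma Rabs_sumR_le n f : Rabs (sumR n f) <= sumR n (fun i => Rabs (f i)).
Proof.
  induction n as [|n IH]; simpl; [rewrite Rabs_R0; lra|].
  eapply Rle_trans; [apply Rabs_triang|]. lra.
Qed.

Lemma Rabs_sumR_mul_le n u w s : (forall i, Rabs (u i) <= s) ->
  Rabs (sumR n (fun i => u i * w i)) <= s * sumR n (fun i => Rabs (w i)).
Proof.
  intros Hu. eapply Rle_trans; [apply Rabs_sumR_le|].
  rewrite <- sumR_scal. apply sumR_le. intros i _.
  rewrite Rabs_mult. apply Rmult_le_compat_r; [apply Rabs_pos | apply Hu].
Qed.

Lemma sumR_ge_term n f j : (forall i, (i < n)%nat -> 0 <= f i) -> (j < n)%nat -> f j <= sumR n f.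
Proof.
  induction n as [|n IH]; simpl; intros H Hj; [lia|].
  destruct (Nat.eq_dec j n) as [->|Hne].
  - assert (0 <= sumR n f) by (apply sumR_nonneg; intros; apply H; lia). lra.
  - assert (f j <= sumR n f) by (apply IH; [intros; apply H; lia | lia]).
    assert (0 <= f n) by (apply H; lia). lra.
Qed.

Lemma sumR_update n f f' j : (forall i, (i < n)%nat -> i <> j -> f' i = f i) -> (j < n)%nat ->
  sumR n f' = sumR n f + (f' j - f j).
Proof.
  induction n as [|n IH]; simpl; intros H Hj; [lia|].
  destruct (Nat.eq_dec j n) as [->|Hne].
  - rewrite (sumR_ext n f' f) by (intros; apply H; lia). lra.
  - rewrite (H n) by lia. rewrite IH; [lra | intros i Hi Hij; apply H; lia | lia].
Qed.

Lemma sumR_swap n m (f : nat -> nat -> R) :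
  sumR n (fun j => sumR m (fun i => f i j)) = sumR m (fun i => sumR n (fun j => f i j)).
Proof.
  induction n as [|n IH]; simpl.
  - rewrite sumR_const. lra.
  - rewrite IH, <- sumR_add. reflexivity.
Qed.

Lemma sumR_exists_ge_avg m M f kap : (m <= M)%nat -> 0 < kap -> kap <= sumR m f ->
  exists i, (i < m)%nat /\ kap / (INR M + 1) <= f i.
Proof.
  intros HmM Hkap Hsum. apply NNPP. intros Hnone.
  assert (HM : 0 <= INR M) by apply pos_INR.
  assert (Hle : sumR m f <= INR M * (kap / (INR M + 1))).
  { apply Rle_trans with (sumR m (fun _ => kap / (INR M + 1))).
    - apply sumR_le. intros i Hi. apply Rnot_lt_le. intros Hlt.
      apply Hnone. exists i. split; [exact Hi | lra].
    - rewrite sumR_const. apply Rmult_le_compat_r.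
      + apply Rlt_le, Rdiv_lt_0_compat; lra.
      + now apply le_INR. }
  assert (INR M * (kap / (INR M + 1)) < kap).
  { apply (Rmult_lt_reg_r (INR M + 1)); [lra|].
    unfold Rdiv. rewrite Rmult_assoc, (Rmult_assoc kap), Rinv_l by lra. nra. }
  lra.
Qed.

Lemma maxabs_nonneg n h : 0 <= maxabs n h.
Proof. induction n as [|n IH]; simpl; [lra|]. eapply Rle_trans; [apply IH | apply Rmax_l]. Qed.

Lemma Rabs_le_maxabs n h i : (i < n)%nat -> Rabs (h i) <= maxabs n h.
Proof.
  induction n as [|n IH]; simpl; intros Hi; [lia|].
  destruct (Nat.eq_dec i n) as [->|Hne]; [apply Rmax_r|].
  eapply Rle_trans; [apply IH; lia | apply Rmax_l].
Qed.

Lemma maxabs_le n h c : 0 <= c -> (forall i, (i < n)%nat -> Rabs (h i) <= c) -> maxabs n h <= c.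
Proof.
  induction n as [|n IH]; simpl; intros Hc H; [lra|].
  apply Rmax_lub; [apply IH; auto | apply H; lia].
Qed.

Lemma sumR_mul_le_maxabs n g h : sumR n (fun i => g i * h i) <= INR n * maxabs n g * maxabs n h.
Proof.
  eapply Rle_trans; [apply Rle_abs|]. eapply Rle_trans; [apply Rabs_sumR_le|].
  rewrite Rmult_assoc, <- sumR_const. apply sumR_le. intros i Hi. rewrite Rabs_mult.
  apply Rmult_le_compat; try apply Rabs_pos; now apply Rabs_le_maxabs.
Qed.

(** * Powers and p-norms *)

Lemma rpow_nonneg x y : 0 <= rpow x y.
Proof. unfold rpow. destruct (Rlt_dec 0 x); [left; apply exp_pos | lra]. Qed.

Lemma rpow_pos x y : 0 < x -> 0 < rpow x y.
Proof. intros Hx. unfold rpow. destruct (Rlt_dec 0 x); [apply exp_pos | lra]. Qed.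

Lemma rpow_0 y : rpow 0 y = 0.
Proof. unfold rpow. destruct (Rlt_dec 0 0); lra. Qed.

Lemma rpow_le x y p : 0 <= x <= y -> 0 < p -> rpow x p <= rpow y p.
Proof.
  intros [[Hx|<-] Hxy] Hp; [|rewrite rpow_0; apply rpow_nonneg].
  unfold rpow. destruct (Rlt_dec 0 x); [|lra]. destruct (Rlt_dec 0 y); [|lra].
  apply Rle_Rpower_l; lra.
Qed.

Lemma rpow_compose x p q : 0 <= x -> p * q = 1 -> rpow (rpow x p) q = x.
Proof.
  intros [Hx|<-] Hpq; [|now rewrite !rpow_0].
  assert (Hxp : 0 < Rpower x p) by apply exp_pos.
  unfold rpow. destruct (Rlt_dec 0 x); [|lra]. destruct (Rlt_dec 0 (Rpower x p)); [|lra].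
  rewrite Rpower_mult, Hpq. apply Rpower_1. exact Hx.
Qed.

Lemma rpow_mul c x p : 0 < c -> 0 <= x -> rpow (c * x) p = rpow c p * rpow x p.
Proof.
  intros Hc [Hx|<-]; [|rewrite Rmult_0_r, !rpow_0; lra].
  unfold rpow. destruct (Rlt_dec 0 (c * x)) as [_|Hn]; [|exfalso; apply Hn; nra].
  destruct (Rlt_dec 0 c); [|lra]. destruct (Rlt_dec 0 x); [|lra].
  now rewrite Rpower_mult_distr.
Qed.

Lemma pnorm_nonneg n p w : 0 <= pnorm n p w.
Proof. apply rpow_nonneg. Qed.

Lemma pnorm_ext n p w w' : (forall j, (j < n)%nat -> w j = w' j) -> pnorm n p w = pnorm n p w'.
Proof. intros H. unfold pnorm. f_equal. apply sumR_ext. intros j Hj. now rewrite H. Qed.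

Lemma rpow_pnorm n p w : 0 < p -> rpow (pnorm n p w) p = sumR n (fun j => rpow (Rabs (w j)) p).
Proof.
  intros Hp. apply rpow_compose; [|field; lra].
  apply sumR_nonneg. intros; apply rpow_nonneg.
Qed.

Lemma Rabs_le_pnorm n p w j : (j < n)%nat -> 0 < p -> Rabs (w j) <= pnorm n p w.
Proof.
  intros Hj Hp. unfold pnorm.
  rewrite <- (rpow_compose (Rabs (w j)) p (/ p)) by (apply Rabs_pos || (field; lra)).
  apply rpow_le; [|apply Rinv_0_lt_compat, Hp]. split; [apply rpow_nonneg|].
  apply (sumR_ge_term n (fun j => rpow (Rabs (w j)) p)); auto.
  intros; apply rpow_nonneg.
Qed.

Lemma pnorm_scale n p w c : 0 < c -> 0 < p -> pnorm n p (fun j => c * w j) = c * pnorm n p w.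
Proof.
  intros Hc Hp. unfold pnorm.
  rewrite (sumR_ext n _ (fun j => rpow c p * rpow (Rabs (w j)) p)).
  2:{ intros j _. rewrite Rabs_mult, (Rabs_right c) by lra.
      apply rpow_mul; [exact Hc | apply Rabs_pos]. }
  rewrite sumR_scal, rpow_mul.
  - rewrite rpow_compose; [reflexivity | lra | field; lra].
  - apply rpow_pos, Hc.
  - apply sumR_nonneg. intros; apply rpow_nonneg.
Qed.

Lemma Rabs_sub_le_of_deriv_le f T K u v : derivable f ->
  (forall c a, Rabs c <= T -> right_deriv f c a -> Rabs a <= K) ->
  Rabs u <= T -> Rabs v <= T -> Rabs (f u - f v) <= K * Rabs (u - v).
Proof.
  intros pr HK Hu Hv.
  assert (Hd : forall c, Rmin u v <= c <= Rmax u v -> Rabs (derive_pt f c (pr c)) <= K).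
  { intros c Hc. apply (HK c).
    - pose proof (Rle_abs u). pose proof (Rle_abs v).
      pose proof (Rle_abs (- u)). pose proof (Rle_abs (- v)). rewrite !Rabs_Ropp in *.
      apply Rabs_le. unfold Rmin, Rmax in Hc. destruct (Rle_dec u v); lra.
    - intros eps Heps. destruct (proj2_sig (pr c) eps Heps) as [del Hdel].
      exists (pos del). split; [apply cond_pos|].
      intros h Hh. apply Hdel; [lra | rewrite Rabs_right; lra]. }
  destruct (Rtotal_order u v) as [Huv|[<-|Huv]].
  - destruct (MVT_cor1 f u v pr Huv) as [c [Hc1 Hc2]].
    rewrite <- Rabs_Ropp, Ropp_minus_distr, Hc1, Rabs_mult, <- (Rabs_Ropp (u - v)), Ropp_minus_distr.
    apply Rmult_le_compat_r; [apply Rabs_pos|]. apply Hd.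
    unfold Rmin, Rmax. destruct (Rle_dec u v); lra.
  - rewrite !Rminus_diag, Rabs_R0, Rmult_0_r. lra.
  - destruct (MVT_cor1 f v u pr Huv) as [c [Hc1 Hc2]]. rewrite Hc1, Rabs_mult.
    apply Rmult_le_compat_r; [apply Rabs_pos|]. apply Hd.
    unfold Rmin, Rmax. destruct (Rle_dec u v); lra.
Qed.

Lemma exists_small_pos a1 e1 a2 e2 : 0 <= a1 -> 0 < e1 -> 0 <= a2 -> 0 < e2 ->
  exists t, 0 < t <= 1 / 2 /\ t * a1 < e1 /\ t * a2 < e2.
Proof.
  intros Ha1 He1 Ha2 He2.
  set (t1 := e1 / (a1 + 1)). set (t2 := e2 / (a2 + 1)).
  assert (Ht1 : 0 < t1 /\ t1 * a1 < e1).
  { unfold t1. split; [apply Rdiv_lt_0_compat; lra|].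
    apply (Rmult_lt_reg_r (a1 + 1)); [lra|]. field_simplify; lra. }
  assert (Ht2 : 0 < t2 /\ t2 * a2 < e2).
  { unfold t2. split; [apply Rdiv_lt_0_compat; lra|].
    apply (Rmult_lt_reg_r (a2 + 1)); [lra|]. field_simplify; lra. }
  exists (Rmin (1 / 2) (Rmin t1 t2)).
  pose proof (Rmin_l (1 / 2) (Rmin t1 t2)). pose proof (Rmin_r (1 / 2) (Rmin t1 t2)).
  pose proof (Rmin_l t1 t2). pose proof (Rmin_r t1 t2).
  assert (0 < Rmin (1 / 2) (Rmin t1 t2)) by (repeat apply Rmin_pos; lra).
  repeat split; nra.
Qed.

(** * Counting hidden units *)

Definition natceil (r : R) : nat := Z.to_nat (up r).

Lemma natceil_ge r : r <= INR (natceil r).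
Proof.
  unfold natceil. destruct (archimed r) as [H1 _]. destruct (Z_lt_le_dec (up r) 0).
  - assert (IZR (up r) < 0) by (apply IZR_lt; lia). pose proof (pos_INR (Z.to_nat (up r))). lra.
  - rewrite INR_IZR_INZ, Z2Nat.id by lia. lra.
Qed.

(* Double counting of the p-th powers of the entries: at least [eps^p] in each column,
   at most [Bw^p] in each row. *)
Lemma layer_width_le (m n M : nat) (w : nat -> nat -> R) (kap Bw p : R) :
  0 < kap -> 0 < p -> (m <= M)%nat ->
  (forall j, (j < n)%nat -> kap <= sumR m (fun i => Rabs (w i j))) ->
  (forall i, (i < m)%nat -> pnorm n p (w i) <= Bw) ->
  (n <= natceil (INR M * rpow Bw p / rpow (kap / (INR M + 1)) p))%nat.
Proof.
  intros Hkap Hp HmM Hcol Hrow.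
  set (eps := kap / (INR M + 1)).
  assert (Heps0 : 0 < eps) by (apply Rdiv_lt_0_compat; pose proof (pos_INR M); lra).
  assert (Heps : 0 < rpow eps p) by now apply rpow_pos.
  assert (Hcount : INR n * rpow eps p <= INR M * rpow Bw p).
  { rewrite <- sumR_const.
    apply Rle_trans with (sumR n (fun j => sumR m (fun i => rpow (Rabs (w i j)) p))).
    - apply sumR_le. intros j Hj.
      destruct (sumR_exists_ge_avg m M _ kap HmM Hkap (Hcol j Hj)) as [i [Hi Hge]].
      apply Rle_trans with (rpow (Rabs (w i j)) p).
      + fold eps in Hge. apply rpow_le; [lra | exact Hp].
      + apply (sumR_ge_term m (fun i => rpow (Rabs (w i j)) p)); [intros; apply rpow_nonneg | exact Hi].
    - rewrite sumR_swap. apply Rle_trans with (INR m * rpow Bw p).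
      + rewrite <- sumR_const. apply sumR_le. intros i Hi. rewrite <- rpow_pnorm by exact Hp.
        apply rpow_le; [split; [apply pnorm_nonneg | now apply Hrow] | exact Hp].
      + apply Rmult_le_compat_r; [apply rpow_nonneg | now apply le_INR]. }
  apply INR_le. eapply Rle_trans; [|apply natceil_ge].
  apply (Rmult_le_reg_r (rpow eps p)); [exact Heps|].
  unfold Rdiv. rewrite Rmult_assoc, Rinv_l; lra.
Qed.

Lemma uniform_bound_upto (P : (nat -> nat) -> Prop) n :
  (forall l, (l <= n)%nat -> exists M, forall d, P d -> (d l <= M)%nat) ->
  exists M, forall d, P d -> forall l, (l <= n)%nat -> (d l <= M)%nat.
Proof.
  induction n as [|n IH]; intros H.
  - destruct (H O (le_n O)) as [M HM]. exists M. intros d Hd l Hl.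
    replace l with O by lia. now apply HM.
  - destruct IH as [M1 HM1]; [intros l Hl; apply H; lia|].
    destruct (H (S n) (le_n _)) as [M2 HM2]. exists (Nat.max M1 M2). intros d Hd l Hl.
    destruct (Nat.eq_dec l (S n)) as [->|Hne].
    + specialize (HM2 d Hd). lia.
    + specialize (HM1 d Hd l ltac:(lia)). lia.
Qed.

(** * Forward propagation *)

Lemma fwd_zero sigma d W x k j : (d k <= j)%nat -> fwd sigma d W x k j = 0.
Proof.
  intros H. destruct k; simpl;
    [destruct (Nat.ltb_spec j (d O)) | destruct (Nat.ltb_spec j (d (S k)))]; auto; lia.
Qed.

Lemma fwd_ext_layers sigma d W W' x k :
  (forall m, (1 <= m <= k)%nat -> forall i j, W m i j = W' m i j) ->
  forall j, fwd sigma d W x k j = fwd sigma d W' x k j.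
Proof.
  induction k as [|k IH]; intros H j; simpl; [reflexivity|].
  destruct (Nat.ltb j (d (S k))); [|reflexivity].
  f_equal. apply sumR_ext. intros i _.
  rewrite IH by (intros; apply H; lia). rewrite H by lia. reflexivity.
Qed.

Definition shrink_fan_out (W : nat -> nat -> nat -> R) (l0 j0 : nat) (t : R) :
  nat -> nat -> nat -> R :=
  fun l i j => if (Nat.eqb l (S l0) && Nat.eqb i j0)%bool then (1 - t) * W l i j else W l i j.

Lemma shrink_fan_out_other_layer W l0 j0 t l i j :
  l <> S l0 -> shrink_fan_out W l0 j0 t l i j = W l i j.
Proof. intros H. unfold shrink_fan_out. now destruct (Nat.eqb_spec l (S l0)). Qed.

Lemma shrink_fan_out_other_row W l0 j0 t i j :
  i <> j0 -> shrink_fan_out W l0 j0 t (S l0) i j = W (S l0) i j.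
Proof. intros H. unfold shrink_fan_out. rewrite Nat.eqb_refl. now destruct (Nat.eqb_spec i j0). Qed.

Lemma shrink_fan_out_row W l0 j0 t j :
  shrink_fan_out W l0 j0 t (S l0) j0 j = (1 - t) * W (S l0) j0 j.
Proof. unfold shrink_fan_out. now rewrite !Nat.eqb_refl. Qed.

Lemma Rabs_shrink_fan_out_le W l0 j0 t l i j :
  0 <= t <= 1 -> Rabs (shrink_fan_out W l0 j0 t l i j) <= Rabs (W l i j).
Proof.
  intros Ht. unfold shrink_fan_out. destruct (_ && _)%bool; [|lra].
  rewrite Rabs_mult, (Rabs_right (1 - t)) by lra.
  pose proof (Rabs_pos (W l i j)). nra.
Qed.

Lemma Rabs_shrink_fan_out_sub d p W l0 j0 t l i j : 0 < p -> 0 <= t -> (j < d l)%nat ->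
  Rabs (shrink_fan_out W l0 j0 t l i j - W l i j) <= t * pnorm (d (S l0)) p (W (S l0) j0).
Proof.
  intros Hp Ht Hj.
  assert (Hpos : 0 <= t * pnorm (d (S l0)) p (W (S l0) j0))
    by (apply Rmult_le_pos; [exact Ht | apply pnorm_nonneg]).
  destruct (Nat.eq_dec l (S l0)) as [->|Hl].
  - destruct (Nat.eq_dec i j0) as [->|Hi].
    + rewrite shrink_fan_out_row.
      replace ((1 - t) * W (S l0) j0 j - W (S l0) j0 j) with (- (t * W (S l0) j0 j)) by ring.
      rewrite Rabs_Ropp, Rabs_mult, (Rabs_right t) by lra.
      apply Rmult_le_compat_l; [exact Ht | now apply Rabs_le_pnorm].
    + rewrite shrink_fan_out_other_row, Rminus_diag, Rabs_R0 by exact Hi. exact Hpos.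
  - rewrite shrink_fan_out_other_layer, Rminus_diag, Rabs_R0 by exact Hl. exact Hpos.
Qed.

Lemma fwd_shrink_fan_out_low sigma d W x l0 j0 t k : (k <= l0)%nat ->
  forall i, fwd sigma d (shrink_fan_out W l0 j0 t) x k i = fwd sigma d W x k i.
Proof.
  intros Hk. apply fwd_ext_layers. intros m Hm i j.
  apply shrink_fan_out_other_layer. lia.
Qed.

Lemma Omega_out_shrink_fan_out L d W lam p l0 j0 t :
  (l0 < L)%nat -> (j0 < d l0)%nat -> 0 < p -> t < 1 ->
  Omega_out L d (shrink_fan_out W l0 j0 t) lam p
  = Omega_out L d W lam p - lam * t * pnorm (d (S l0)) p (W (S l0) j0).
Proof.
  intros Hl0 Hj0 Hp Ht. unfold Omega_out.
  rewrite (sumR_update L (fun k => sumR (d k) (fun i => pnorm (d (S k)) p (fun j => W (S k) i j)))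
             _ l0);
    [| intros k _ Hk; apply sumR_ext; intros i _; apply pnorm_ext; intros j _;
       apply shrink_fan_out_other_layer; lia
     | exact Hl0].
  rewrite (sumR_update (d l0) (fun i => pnorm (d (S l0)) p (fun j => W (S l0) i j)) _ j0);
    [| intros i _ Hi; apply pnorm_ext; intros j _; now apply shrink_fan_out_other_row
     | exact Hj0].
  rewrite (pnorm_ext _ _ _ (fun j => (1 - t) * W (S l0) j0 j))
    by (intros; apply shrink_fan_out_row).
  rewrite pnorm_scale by lra.
  change (pnorm (d (S l0)) p (fun j => W (S l0) j0 j)) with (pnorm (d (S l0)) p (W (S l0) j0)).
  ring.
Qed.

Section Propagation.

Variables (L : nat) (sigma : nat -> R -> R) (b1 b2 : nat -> R -> R).
Hypothesis Hb1_nn : forall l S, 0 <= S -> 0 <= b1 l S.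
Hypothesis Hb2_nn : forall l S, 0 <= S -> 0 <= b2 l S.
Hypothesis Hb1 : forall l, (1 <= l <= L)%nat -> forall S s, 0 <= S -> Rabs s <= S ->
  Rabs (sigma l s) <= b1 l S * Rabs s.
Hypothesis Hb2 : forall l, (1 <= l <= L)%nat -> forall S s a, 0 <= S -> Rabs s <= S ->
  (left_deriv (sigma l) s a \/ right_deriv (sigma l) s a) -> Rabs a <= b2 l S.
Hypothesis Hdiff : forall l, (1 <= l <= L)%nat -> derivable (sigma l).

Variables (X0 Bw : R).
Hypothesis HX0 : 0 <= X0.
Hypothesis HBw : 0 <= Bw.

Fixpoint act_bound (k : nat) : R :=
  match k with
  | O => X0
  | S k => b1 (S k) (act_bound k * Bw) * (act_bound k * Bw)
  end.

Lemma act_bound_nonneg k : 0 <= act_bound k.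
Proof.
  induction k as [|k IH]; simpl; [exact HX0|].
  assert (0 <= act_bound k * Bw) by (apply Rmult_le_pos; assumption).
  apply Rmult_le_pos; auto.
Qed.

Definition fan_ins_l1_le (d : nat -> nat) (W : nat -> nat -> nat -> R) : Prop :=
  forall k, (S k <= L)%nat -> forall j, (j < d (S k))%nat ->
    sumR (d k) (fun i => Rabs (W (S k) i j)) <= Bw.

Lemma fan_ins_l1_le_shrink_fan_out d W l0 j0 t : 0 <= t <= 1 ->
  fan_ins_l1_le d W -> fan_ins_l1_le d (shrink_fan_out W l0 j0 t).
Proof.
  intros Ht Hc k Hk j Hj.
  apply Rle_trans with (sumR (d k) (fun i => Rabs (W (S k) i j))); [|now apply Hc].
  apply sumR_le. intros. now apply Rabs_shrink_fan_out_le.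
Qed.

Variables (d : nat -> nat) (x : nat -> R).
Hypothesis Hx : forall i, (i < d O)%nat -> Rabs (x i) <= X0.

Lemma Rabs_fwd_le W : fan_ins_l1_le d W ->
  forall k, (k <= L)%nat -> forall j, Rabs (fwd sigma d W x k j) <= act_bound k.
Proof.
  intros Hc. induction k as [|k IH]; intros Hk j; simpl.
  - destruct (Nat.ltb_spec j (d O)); [auto | rewrite Rabs_R0; exact HX0].
  - destruct (Nat.ltb_spec j (d (S k))) as [Hj|Hj].
    2:{ rewrite Rabs_R0. apply (act_bound_nonneg (S k)). }
    assert (HS := act_bound_nonneg k).
    assert (Hz : Rabs (sumR (d k) (fun i => fwd sigma d W x k i * W (S k) i j)) <= act_bound k * Bw).
    { eapply Rle_trans; [apply Rabs_sumR_mul_le; intros; apply IH; lia|].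
      apply Rmult_le_compat_l; [exact HS | apply Hc; assumption]. }
    eapply Rle_trans; [apply Hb1; [lia | | apply Hz]; nra|].
    apply Rmult_le_compat_l; [apply Hb1_nn; nra | exact Hz].
Qed.

Lemma Rabs_preact_le W k j : fan_ins_l1_le d W -> (S k <= L)%nat -> (j < d (S k))%nat ->
  Rabs (sumR (d k) (fun i => fwd sigma d W x k i * W (S k) i j)) <= act_bound k * Bw.
Proof.
  intros Hc Hk Hj. eapply Rle_trans.
  - apply Rabs_sumR_mul_le. intros i. apply Rabs_fwd_le; [exact Hc | lia].
  - apply Rmult_le_compat_l; [apply act_bound_nonneg | now apply Hc].
Qed.

Lemma Rabs_fwd_le_fan_in W k j : fan_ins_l1_le d W -> (S k <= L)%nat ->
  Rabs (fwd sigma d W x (S k) j)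
  <= b1 (S k) (act_bound k * Bw) * act_bound k * sumR (d k) (fun i => Rabs (W (S k) i j)).
Proof.
  intros Hc Hk. assert (HS := act_bound_nonneg k).
  assert (Hcoef : 0 <= b1 (S k) (act_bound k * Bw)) by (apply Hb1_nn; nra).
  simpl. destruct (Nat.ltb_spec j (d (S k))) as [Hj|Hj].
  2:{ rewrite Rabs_R0. apply Rmult_le_pos; [nra|].
      apply sumR_nonneg. intros; apply Rabs_pos. }
  eapply Rle_trans.
  - apply (Hb1 (S k) ltac:(lia) (act_bound k * Bw)); [nra | now apply Rabs_preact_le].
  - rewrite Rmult_assoc. apply Rmult_le_compat_l; [exact Hcoef|].
    apply Rabs_sumR_mul_le. intros i. apply Rabs_fwd_le; [exact Hc | lia].
Qed.

Lemma fwd_succ_sub_le W W' k j : fan_ins_l1_le d W -> fan_ins_l1_le d W' -> (S k <= L)%nat ->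
  Rabs (fwd sigma d W' x (S k) j - fwd sigma d W x (S k) j)
  <= b2 (S k) (act_bound k * Bw) *
     Rabs (sumR (d k) (fun i => fwd sigma d W' x k i * W' (S k) i j)
           - sumR (d k) (fun i => fwd sigma d W x k i * W (S k) i j)).
Proof.
  intros Hc Hc' Hk. assert (HS := act_bound_nonneg k).
  simpl. destruct (Nat.ltb_spec j (d (S k))) as [Hj|Hj].
  - apply Rabs_sub_le_of_deriv_le with (T := act_bound k * Bw).
    + apply Hdiff. lia.
    + intros c a Hc0 Ha. apply (Hb2 (S k)) with (s := c); auto; [lia | nra].
    + now apply Rabs_preact_le.
    + now apply Rabs_preact_le.
  - rewrite Rminus_diag, Rabs_R0. apply Rmult_le_pos; [apply Hb2_nn; nra | apply Rabs_pos].
Qed.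

Fixpoint gain (m n : nat) : R :=
  match n with
  | O => 1
  | S n => b2 (S (m + n)) (act_bound (m + n) * Bw) * Bw * gain m n
  end.

Lemma gain_nonneg m n : 0 <= gain m n.
Proof.
  induction n as [|n IH]; simpl; [lra|].
  assert (0 <= act_bound (m + n) * Bw) by (apply Rmult_le_pos; [apply act_bound_nonneg | exact HBw]).
  repeat apply Rmult_le_pos; auto.
Qed.

Lemma fwd_sub_propagate W W' m delta :
  fan_ins_l1_le d W -> fan_ins_l1_le d W' -> 0 <= delta ->
  (forall i, Rabs (fwd sigma d W' x m i - fwd sigma d W x m i) <= delta) ->
  (forall l, (m < l)%nat -> forall i j, W' l i j = W l i j) ->
  forall n, (m + n <= L)%nat -> forall i,
    Rabs (fwd sigma d W' x (m + n) i - fwd sigma d W x (m + n) i) <= gain m n * delta.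
Proof.
  intros Hc Hc' Hdelta Hm Heq. induction n as [|n IH]; intros Hn j.
  - rewrite Nat.add_0_r, Rmult_1_l. apply Hm.
  - rewrite Nat.add_succ_r. assert (HS := act_bound_nonneg (m + n)).
    destruct (Nat.lt_ge_cases j (d (S (m + n)))) as [Hj|Hj].
    2:{ rewrite !fwd_zero, Rminus_diag, Rabs_R0 by exact Hj.
        apply Rmult_le_pos; [apply (gain_nonneg m (S n)) | exact Hdelta]. }
    eapply Rle_trans; [apply fwd_succ_sub_le; auto; lia|]. simpl gain.
    rewrite <- sumR_sub.
    rewrite (sumR_ext _ _ (fun i => (fwd sigma d W' x (m + n) i - fwd sigma d W x (m + n) i)
                                    * W (S (m + n)) i j))
      by (intros i _; rewrite Heq by lia; ring).
    rewrite !Rmult_assoc. apply Rmult_le_compat_l; [apply Hb2_nn; nra|].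
    eapply Rle_trans; [apply Rabs_sumR_mul_le; intros; apply IH; lia|].
    rewrite Rmult_comm. apply Rmult_le_compat_r.
    + apply Rmult_le_pos; [apply gain_nonneg | exact Hdelta].
    + apply Hc; [lia | exact Hj].
Qed.

Lemma fwd_shrink_fan_out_sub_le W p l0 j0 t : fan_ins_l1_le d W ->
  (S l0 <= L)%nat -> (j0 < d l0)%nat -> 0 < p -> 0 <= t <= 1 ->
  forall j, Rabs (fwd sigma d (shrink_fan_out W l0 j0 t) x (S l0) j - fwd sigma d W x (S l0) j)
  <= b2 (S l0) (act_bound l0 * Bw) *
     (t * Rabs (fwd sigma d W x l0 j0) * pnorm (d (S l0)) p (W (S l0) j0)).
Proof.
  intros Hc Hl0 Hj0 Hp Ht j. set (W' := shrink_fan_out W l0 j0 t).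
  assert (HS := act_bound_nonneg l0).
  assert (Hc' : fan_ins_l1_le d W') by now apply fan_ins_l1_le_shrink_fan_out.
  destruct (Nat.lt_ge_cases j (d (S l0))) as [Hj|Hj].
  2:{ rewrite !fwd_zero, Rminus_diag, Rabs_R0 by exact Hj.
      apply Rmult_le_pos; [apply Hb2_nn; nra|].
      repeat apply Rmult_le_pos; try lra; [apply Rabs_pos | apply pnorm_nonneg]. }
  eapply Rle_trans; [now apply fwd_succ_sub_le|].
  apply Rmult_le_compat_l; [apply Hb2_nn; nra|].
  rewrite (sumR_update (d l0) (fun i => fwd sigma d W x l0 i * W (S l0) i j) _ j0); auto.
  2:{ intros i _ Hi. unfold W'. rewrite fwd_shrink_fan_out_low, shrink_fan_out_other_row; auto. }
  unfold W'. rewrite fwd_shrink_fan_out_low, shrink_fan_out_row by lia.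
  replace (_ + _ - _) with (- (t * fwd sigma d W x l0 j0 * W (S l0) j0 j)) by ring.
  rewrite Rabs_Ropp, !Rabs_mult, (Rabs_right t) by lra.
  apply Rmult_le_compat_l; [apply Rmult_le_pos; [lra | apply Rabs_pos]|].
  now apply Rabs_le_pnorm.
Qed.

Lemma netf_shrink_fan_out_sub_le W p l0 j0 t : fan_ins_l1_le d W ->
  (S l0 <= L)%nat -> (j0 < d l0)%nat -> 0 < p -> 0 <= t <= 1 ->
  forall i, Rabs (netf L sigma d (shrink_fan_out W l0 j0 t) x i - netf L sigma d W x i)
  <= gain (S l0) (L - S l0) * b2 (S l0) (act_bound l0 * Bw) *
     (t * Rabs (fwd sigma d W x l0 j0) * pnorm (d (S l0)) p (W (S l0) j0)).
Proof.
  intros Hc Hl0 Hj0 Hp Ht i. assert (HS := act_bound_nonneg l0).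
  assert (Hc' : fan_ins_l1_le d (shrink_fan_out W l0 j0 t))
    by now apply fan_ins_l1_le_shrink_fan_out.
  assert (Hdelta : 0 <= b2 (S l0) (act_bound l0 * Bw) *
                        (t * Rabs (fwd sigma d W x l0 j0) * pnorm (d (S l0)) p (W (S l0) j0))).
  { apply Rmult_le_pos; [apply Hb2_nn; nra|].
    repeat apply Rmult_le_pos; try lra; [apply Rabs_pos | apply pnorm_nonneg]. }
  assert (Hout := fwd_sub_propagate W _ (S l0) _ Hc Hc' Hdelta
                    (fwd_shrink_fan_out_sub_le W p l0 j0 t Hc Hl0 Hj0 Hp Ht)
                    (fun l Hl i j => shrink_fan_out_other_layer W l0 j0 t l i j ltac:(lia))
                    (L - S l0) ltac:(lia) i).
  replace (S l0 + (L - S l0))%nat with L in Hout by lia.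
  unfold netf. rewrite Rmult_assoc. exact Hout.
Qed.

End Propagation.

Definition sum_data {Y : Type} (f : (nat -> R) * Y -> R) (D : list ((nat -> R) * Y)) : R :=
  fold_right (fun xy acc => f xy + acc) 0 D.

Lemma sum_data_nonneg {Y} (f : (nat -> R) * Y -> R) D :
  (forall xy, In xy D -> 0 <= f xy) -> 0 <= sum_data f D.
Proof.
  induction D as [|a D IH]; simpl; intros H; [lra|].
  assert (0 <= f a) by auto. assert (0 <= sum_data f D) by auto. unfold sum_data in *. lra.
Qed.

Lemma sum_data_ge {Y} (f : (nat -> R) * Y -> R) D xy :
  (forall xy, In xy D -> 0 <= f xy) -> In xy D -> f xy <= sum_data f D.
Proof.
  induction D as [|a D IH]; simpl; intros H Hxy; [tauto|].
  assert (0 <= f a) by auto. assert (0 <= sum_data f D) by (apply sum_data_nonneg; auto).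
  destruct Hxy as [<-|Hxy]; [unfold sum_data in *; lra|].
  assert (f xy <= sum_data f D) by auto. unfold sum_data in *. lra.
Qed.

Lemma sum_data_sub_le {Y} (f f' : (nat -> R) * Y -> R) D c :
  (forall xy, In xy D -> f' xy - f xy <= c) ->
  sum_data f' D - sum_data f D <= INR (length D) * c.
Proof.
  induction D as [|a D IH]; intros H; [unfold sum_data; simpl; lra|].
  assert (f' a - f a <= c) by (apply H; simpl; auto).
  assert (sum_data f' D - sum_data f D <= INR (length D) * c)
    by (apply IH; intros; apply H; simpl; auto).
  unfold sum_data in *. simpl length. rewrite S_INR. simpl. lra.
Qed.

Lemma Rinv_INR_nonneg n : 0 <= / INR n.
Proof.
  destruct n as [|n]; [simpl; rewrite Rinv_0; lra|].
  apply Rlt_le, Rinv_0_lt_compat, lt_0_INR. lia.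
Qed.

Lemma Rinv_INR_mul_le n c : 0 <= c -> / INR n * (INR n * c) <= c.
Proof.
  intros Hc. destruct (Nat.eq_dec n 0) as [->|Hn]; [simpl; rewrite Rinv_0; lra|].
  rewrite <- Rmult_assoc, Rinv_l, Rmult_1_l by (apply not_0_INR; exact Hn). lra.
Qed.

Lemma exists_common_delta {A : Type} (P : A -> R -> Prop) (l : list A) :
  (forall a del del', P a del -> 0 < del' <= del -> P a del') ->
  (forall a, In a l -> exists del, 0 < del /\ P a del) ->
  exists del, 0 < del /\ forall a, In a l -> P a del.
Proof.
  intros Hmono. induction l as [|a l IH]; intros H.
  - exists 1. split; [lra | intros a []].
  - destruct (H a (or_introl eq_refl)) as [del1 [Hdel1 P1]].
    destruct IH as [del2 [Hdel2 P2]]; [intros; apply H; right; auto|].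
    assert (Hmin : 0 < Rmin del1 del2) by (apply Rmin_pos; assumption).
    exists (Rmin del1 del2). split; [exact Hmin|]. intros b [<-|Hb].
    + apply (Hmono _ del1); [exact P1 | split; [exact Hmin | apply Rmin_l]].
    + apply (Hmono _ del2); [auto | split; [exact Hmin | apply Rmin_r]].
Qed.

Definition input_radius {Y : Type} (d0 : nat) (D : list ((nat -> R) * Y)) : R :=
  sum_data (fun xy => maxabs d0 (fst xy)) D.

(** * Proper local minima *)

Section LocalMinimum.

Variables (Y : Type) (L d0 dL : nat) (sigma : nat -> R -> R) (b1 b2 : nat -> R -> R)
  (e : (nat -> R) -> Y -> R) (b3 : R -> R) (D : list ((nat -> R) * Y)) (lam p B : R).
Hypothesis Hb1_nn : forall l S, 0 <= S -> 0 <= b1 l S.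
Hypothesis Hb2_nn : forall l S, 0 <= S -> 0 <= b2 l S.
Hypothesis Hb1 : forall l, (1 <= l <= L)%nat -> forall S s, 0 <= S -> Rabs s <= S ->
  Rabs (sigma l s) <= b1 l S * Rabs s.
Hypothesis Hb2 : forall l, (1 <= l <= L)%nat -> forall S s a, 0 <= S -> Rabs s <= S ->
  (left_deriv (sigma l) s a \/ right_deriv (sigma l) s a) -> Rabs a <= b2 l S.
Hypothesis He_nn : forall v y, vec dL v -> 0 <= e v y.
Hypothesis He_diff : forall v y, vec dL v -> exists g, frechet dL (fun u => e u y) v g.
Hypothesis He_b3 : forall S v y g, vec dL v -> e v y <= S ->
  frechet dL (fun u => e u y) v g -> maxabs dL g <= b3 S.
Hypothesis Hdiff : forall l, (1 <= l <= L)%nat -> derivable (sigma l).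
Hypothesis Hlam : 0 < lam.
Hypothesis Hp : 0 < p.

Definition weight_radius : R := Rabs B / lam.
Definition loss_radius : R := INR (length D) * Rabs B.
Definition loss_slope : R := INR dL * Rabs (b3 loss_radius) + 1.

Definition out_gain (k : nat) : R :=
  gain b1 b2 (input_radius d0 D) weight_radius (S (S k)) (L - S (S k))
  * b2 (S (S k)) (act_bound b1 (input_radius d0 D) weight_radius (S k) * weight_radius).
Definition act_fan_in_coeff (k : nat) : R :=
  b1 (S k) (act_bound b1 (input_radius d0 D) weight_radius k * weight_radius)
  * act_bound b1 (input_radius d0 D) weight_radius k.
Definition fan_in_coeff (k : nat) : R := loss_slope * out_gain k * act_fan_in_coeff k.

Lemma weight_radius_nonneg : 0 <= weight_radius.
Proof.
  unfold weight_radius, Rdiv.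
  apply Rmult_le_pos; [apply Rabs_pos | apply Rlt_le, Rinv_0_lt_compat, Hlam].
Qed.

Lemma input_radius_nonneg : 0 <= input_radius d0 D.
Proof. apply sum_data_nonneg. intros; apply maxabs_nonneg. Qed.

Lemma loss_slope_pos : 0 < loss_slope.
Proof. unfold loss_slope. pose proof (pos_INR dL). pose proof (Rabs_pos (b3 loss_radius)). nra. Qed.

Lemma out_gain_nonneg k : 0 <= out_gain k.
Proof.
  pose proof weight_radius_nonneg. pose proof input_radius_nonneg.
  unfold out_gain. apply Rmult_le_pos; [now apply gain_nonneg|]. apply Hb2_nn.
  apply Rmult_le_pos; [now apply act_bound_nonneg | assumption].
Qed.

Lemma act_fan_in_coeff_nonneg k : 0 <= act_fan_in_coeff k.
Proof.
  pose proof weight_radius_nonneg. pose proof input_radius_nonneg.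
  assert (0 <= act_bound b1 (input_radius d0 D) weight_radius k) by now apply act_bound_nonneg.
  unfold act_fan_in_coeff. apply Rmult_le_pos; [apply Hb1_nn; nra | assumption].
Qed.

Lemma fan_in_coeff_nonneg k : 0 <= fan_in_coeff k.
Proof.
  unfold fan_in_coeff. pose proof loss_slope_pos.
  apply Rmult_le_pos; [apply Rmult_le_pos; [lra | apply out_gain_nonneg]|].
  apply act_fan_in_coeff_nonneg.
Qed.

Section Minimizer.

Variables (d : nat -> nat) (W : nat -> nat -> nat -> R).
Hypothesis HdL : d L = dL.

Definition data_loss (W0 : nat -> nat -> nat -> R) : R :=
  sum_data (fun xy => e (netf L sigma d W0 (fst xy)) (snd xy)) D.

Lemma Eobj_data_loss W0 :
  Eobj L sigma e D lam p d W0 = / INR (length D) * data_loss W0 + Omega_out L d W0 lam p.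
Proof. reflexivity. Qed.

Lemma netf_vec W0 x : vec dL (netf L sigma d W0 x).
Proof. intros i Hi. apply fwd_zero. now rewrite HdL. Qed.

Lemma data_loss_nonneg W0 : 0 <= data_loss W0.
Proof. apply sum_data_nonneg. intros. apply He_nn, netf_vec. Qed.

Hypothesis HEB : Eobj L sigma e D lam p d W <= B.

Lemma Omega_out_le : Omega_out L d W lam p <= Rabs B.
Proof.
  rewrite Eobj_data_loss in HEB. pose proof (Rle_abs B).
  assert (0 <= / INR (length D) * data_loss W)
    by (apply Rmult_le_pos; [apply Rinv_INR_nonneg | apply data_loss_nonneg]).
  lra.
Qed.

Lemma row_pnorm_sum_le k : (S k <= L)%nat ->
  sumR (d k) (fun i => pnorm (d (S k)) p (W (S k) i)) <= weight_radius.
Proof.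
  intros Hk. unfold weight_radius. apply (Rmult_le_reg_l lam); [exact Hlam|].
  replace (lam * (Rabs B / lam)) with (Rabs B) by (field; lra).
  eapply Rle_trans; [|apply Omega_out_le]. unfold Omega_out.
  apply Rmult_le_compat_l; [lra|].
  apply (sumR_ge_term L (fun k => sumR (d k) (fun i => pnorm (d (S k)) p (fun j => W (S k) i j))));
    [intros; apply sumR_nonneg; intros; apply pnorm_nonneg | lia].
Qed.

Lemma row_pnorm_le k i : (S k <= L)%nat -> (i < d k)%nat ->
  pnorm (d (S k)) p (W (S k) i) <= weight_radius.
Proof.
  intros Hk Hi.
  apply Rle_trans with (sumR (d k) (fun i => pnorm (d (S k)) p (W (S k) i)));
    [|now apply row_pnorm_sum_le].
  apply (sumR_ge_term (d k) (fun i => pnorm (d (S k)) p (W (S k) i)));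
    [intros; apply pnorm_nonneg | exact Hi].
Qed.

Lemma fan_ins_l1_le_weight_radius : fan_ins_l1_le L weight_radius d W.
Proof.
  intros k Hk j Hj.
  apply Rle_trans with (sumR (d k) (fun i => pnorm (d (S k)) p (W (S k) i)));
    [|now apply row_pnorm_sum_le].
  apply sumR_le. intros i Hi. now apply Rabs_le_pnorm.
Qed.

Lemma loss_le_loss_radius xy : In xy D -> e (netf L sigma d W (fst xy)) (snd xy) <= loss_radius.
Proof.
  intros Hxy. rewrite Eobj_data_loss in HEB.
  assert (HN : 0 < INR (length D)) by (apply lt_0_INR; destruct D; simpl in *; [tauto | lia]).
  apply Rle_trans with (data_loss W).
  - apply (sum_data_ge (fun xy => e (netf L sigma d W (fst xy)) (snd xy)));
      [intros; apply He_nn, netf_vec | exact Hxy].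
  - unfold loss_radius. replace (data_loss W) with (INR (length D) * (/ INR (length D) * data_loss W))
      by (field; lra).
    apply Rmult_le_compat_l; [lra|]. pose proof (Rle_abs B).
    assert (0 <= Omega_out L d W lam p).
    { apply Rmult_le_pos; [lra|].
      apply sumR_nonneg; intros; apply sumR_nonneg; intros; apply pnorm_nonneg. }
    lra.
Qed.

(* Each sample's loss is at most [loss_radius], so its gradient is bounded by [b3 loss_radius]. *)
Lemma loss_increment_le : exists del, 0 < del /\
  forall xy, In xy D -> forall h, vec dL h -> maxabs dL h < del ->
    e (fun i => netf L sigma d W (fst xy) i + h i) (snd xy) - e (netf L sigma d W (fst xy)) (snd xy)
    <= loss_slope * maxabs dL h.
Proof.
  apply (exists_common_delta (fun xy del => forall h, vec dL h -> maxabs dL h < del ->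
      e (fun i => netf L sigma d W (fst xy) i + h i) (snd xy) - e (netf L sigma d W (fst xy)) (snd xy)
      <= loss_slope * maxabs dL h)).
  { intros xy del del' H Hdel h Hh Hh'. apply H; [exact Hh | lra]. }
  intros xy Hxy. destruct (He_diff (netf L sigma d W (fst xy)) (snd xy) (netf_vec _ _)) as [g Hg].
  assert (Hgb := He_b3 _ _ _ g (netf_vec _ _) (loss_le_loss_radius xy Hxy) Hg).
  destruct (Hg 1 Rlt_0_1) as [del [Hdel Hd]]. exists del. split; [exact Hdel|].
  intros h Hh Hh'. specialize (Hd h Hh Hh'). rewrite Rmult_1_l in Hd.
  assert (Hlin := sumR_mul_le_maxabs dL g h).
  pose proof (maxabs_nonneg dL h). pose proof (pos_INR dL).
  assert (maxabs dL g <= Rabs (b3 loss_radius)) by (eapply Rle_trans; [exact Hgb | apply Rle_abs]).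
  assert (INR dL * maxabs dL g * maxabs dL h <= INR dL * Rabs (b3 loss_radius) * maxabs dL h).
  { apply Rmult_le_compat_r; [lra|]. apply Rmult_le_compat_l; lra. }
  pose proof (Rle_abs (e (fun i => netf L sigma d W (fst xy) i + h i) (snd xy)
    - e (netf L sigma d W (fst xy)) (snd xy) - sumR dL (fun i => g i * h i))).
  unfold loss_slope. lra.
Qed.

Hypothesis Hd0 : d O = d0.

Lemma Rabs_input_le xy : In xy D -> forall i, (i < d O)%nat -> Rabs (fst xy i) <= input_radius d0 D.
Proof.
  intros Hxy i Hi. rewrite Hd0 in Hi.
  apply Rle_trans with (maxabs d0 (fst xy)); [now apply Rabs_le_maxabs|].
  apply (sum_data_ge (fun xy => maxabs d0 (fst xy))); [intros; apply maxabs_nonneg | exact Hxy].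
Qed.

Lemma maxabs_netf_shrink_fan_out_sub_le k j0 t xy :
  (S k <= L - 1)%nat -> (j0 < d (S k))%nat -> 0 <= t <= 1 -> In xy D ->
  maxabs dL (fun i => netf L sigma d (shrink_fan_out W (S k) j0 t) (fst xy) i
                      - netf L sigma d W (fst xy) i)
  <= out_gain k * (t * Rabs (fwd sigma d W (fst xy) (S k) j0) * pnorm (d (S (S k))) p (W (S (S k)) j0)).
Proof.
  intros Hk Hj0 Ht Hxy.
  assert (HX0 := input_radius_nonneg). assert (HBw := weight_radius_nonneg).
  apply maxabs_le.
  - apply Rmult_le_pos; [apply out_gain_nonneg|].
    apply Rmult_le_pos; [apply Rmult_le_pos; [lra | apply Rabs_pos] | apply pnorm_nonneg].
  - intros i _. unfold out_gain. eapply netf_shrink_fan_out_sub_le; eauto.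
    + now apply Rabs_input_le.
    + apply fan_ins_l1_le_weight_radius.
    + lia.
Qed.

Lemma loss_shrink_fan_out_sub_le k j0 t del :
  (S k <= L - 1)%nat -> (j0 < d (S k))%nat -> 0 <= t <= 1 ->
  (forall xy, In xy D -> forall h, vec dL h -> maxabs dL h < del ->
    e (fun i => netf L sigma d W (fst xy) i + h i) (snd xy) - e (netf L sigma d W (fst xy)) (snd xy)
    <= loss_slope * maxabs dL h) ->
  t * (out_gain k * act_bound b1 (input_radius d0 D) weight_radius (S k)
       * pnorm (d (S (S k))) p (W (S (S k)) j0)) < del ->
  forall xy, In xy D ->
    e (netf L sigma d (shrink_fan_out W (S k) j0 t) (fst xy)) (snd xy)
    - e (netf L sigma d W (fst xy)) (snd xy)
    <= loss_slope * (out_gain k * (t * (act_fan_in_coeff k * sumR (d k) (fun i => Rabs (W (S k) i j0)))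
                                   * pnorm (d (S (S k))) p (W (S (S k)) j0))).
Proof.
  intros Hk Hj0 Ht Hinc Htdel xy Hxy.
  set (R0 := pnorm (d (S (S k))) p (W (S (S k)) j0)).
  set (v := netf L sigma d W (fst xy)).
  set (h := fun i => netf L sigma d (shrink_fan_out W (S k) j0 t) (fst xy) i - v i).
  assert (HX0 := input_radius_nonneg). assert (HBw := weight_radius_nonneg).
  assert (Hc := fan_ins_l1_le_weight_radius).
  assert (Hx := Rabs_input_le xy Hxy).
  assert (HR0 : 0 <= R0) by apply pnorm_nonneg.
  assert (HK := out_gain_nonneg k).
  assert (Hh := maxabs_netf_shrink_fan_out_sub_le k j0 t xy Hk Hj0 Ht Hxy). fold R0 v h in Hh.
  assert (Hmono : forall a b, a <= b -> out_gain k * (t * a * R0) <= out_gain k * (t * b * R0))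
    by (intros; apply Rmult_le_compat_l; [lra|]; apply Rmult_le_compat_r; [lra|]; nra).
  assert (Hx_act : Rabs (fwd sigma d W (fst xy) (S k) j0)
                   <= act_bound b1 (input_radius d0 D) weight_radius (S k))
    by (eapply Rabs_fwd_le; eauto; lia).
  assert (Hhdel : maxabs dL h < del).
  { eapply Rle_lt_trans; [exact Hh|]. eapply Rle_lt_trans; [apply Hmono, Hx_act|].
    replace (out_gain k * (t * act_bound b1 (input_radius d0 D) weight_radius (S k) * R0))
      with (t * (out_gain k * act_bound b1 (input_radius d0 D) weight_radius (S k) * R0)) by ring.
    exact Htdel. }
  assert (Hhvec : vec dL h) by (intros i Hi; unfold h, v; rewrite !netf_vec by exact Hi; ring).
  specialize (Hinc xy Hxy h Hhvec Hhdel).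
  replace (fun i => netf L sigma d W (fst xy) i + h i)
    with (netf L sigma d (shrink_fan_out W (S k) j0 t) (fst xy)) in Hinc
    by (apply functional_extensionality; intros i; unfold h, v; ring).
  eapply Rle_trans; [exact Hinc|]. apply Rmult_le_compat_l; [pose proof loss_slope_pos; lra|].
  eapply Rle_trans; [exact Hh|]. apply Hmono.
  unfold act_fan_in_coeff. eapply Rabs_fwd_le_fan_in; eauto; lia.
Qed.

Hypothesis Hloc : local_min L sigma e D lam p d W.
Hypothesis Hproper : proper L d W.

Lemma fan_out_pnorm_pos l0 j0 : (1 <= l0 <= L - 1)%nat -> (j0 < d l0)%nat ->
  0 < pnorm (d (S l0)) p (W (S l0) j0).
Proof.
  intros Hl0 Hj0. destruct (classic (fan_out_zero d W l0 j0)) as [Hz|Hnz].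
  - exfalso. apply (Hproper l0 j0 Hl0 Hj0). now right.
  - apply not_all_ex_not in Hnz. destruct Hnz as [j Hj].
    apply imply_to_and in Hj. destruct Hj as [Hj Hne].
    apply Rlt_le_trans with (Rabs (W (S l0) j0 j)); [now apply Rabs_pos_lt | now apply Rabs_le_pnorm].
Qed.

Lemma lam_le_fan_in_coeff_mul k j0 : (S k <= L - 1)%nat -> (j0 < d (S k))%nat ->
  lam <= fan_in_coeff k * sumR (d k) (fun i => Rabs (W (S k) i j0)).
Proof.
  intros Hk Hj0.
  set (R0 := pnorm (d (S (S k))) p (W (S (S k)) j0)).
  set (c := sumR (d k) (fun i => Rabs (W (S k) i j0))).
  assert (HR0 : 0 < R0) by (apply fan_out_pnorm_pos; [lia | exact Hj0]).
  assert (Hact : 0 <= act_bound b1 (input_radius d0 D) weight_radius (S k))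
    by (apply act_bound_nonneg; [exact Hb1_nn | apply input_radius_nonneg | apply weight_radius_nonneg]).
  assert (HK := out_gain_nonneg k).
  destruct Hloc as [eps [Heps Hmin]].
  destruct loss_increment_le as [del [Hdel Hinc]].
  assert (Hgrowth : 0 <= out_gain k * act_bound b1 (input_radius d0 D) weight_radius (S k) * R0)
    by (apply Rmult_le_pos; [now apply Rmult_le_pos | lra]).
  destruct (exists_small_pos _ _ _ _ (Rlt_le _ _ HR0) Heps Hgrowth Hdel) as [t [Ht [HtR Htdel]]].
  assert (Hstep := loss_shrink_fan_out_sub_le k j0 t del Hk Hj0 ltac:(lra) Hinc Htdel).
  assert (Hdata := sum_data_sub_le _ _ D _ Hstep).
  assert (HE : Eobj L sigma e D lam p d W <= Eobj L sigma e D lam p d (shrink_fan_out W (S k) j0 t)).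
  { apply Hmin. intros l i j Hl Hi Hj. eapply Rle_lt_trans; [|exact HtR].
    apply Rabs_shrink_fan_out_sub; [exact Hp | lra | exact Hj]. }
  rewrite !Eobj_data_loss, Omega_out_shrink_fan_out in HE by (lia || lra).
  fold R0 c in Hdata, HE.
  set (c0 := loss_slope * (out_gain k * (t * (act_fan_in_coeff k * c) * R0))) in Hdata.
  assert (Hc0 : 0 <= c0).
  { pose proof loss_slope_pos. pose proof (act_fan_in_coeff_nonneg k).
    assert (0 <= c) by (apply sumR_nonneg; intros; apply Rabs_pos).
    unfold c0. apply Rmult_le_pos; [lra|]. apply Rmult_le_pos; [exact HK|].
    apply Rmult_le_pos; [apply Rmult_le_pos; [lra | now apply Rmult_le_pos] | lra]. }
  assert (Hdrop : lam * t * R0 <= c0).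
  { pose proof (Rinv_INR_mul_le (length D) c0 Hc0).
    assert (/ INR (length D) * (data_loss (shrink_fan_out W (S k) j0 t) - data_loss W)
            <= / INR (length D) * (INR (length D) * c0))
      by (apply Rmult_le_compat_l; [apply Rinv_INR_nonneg | exact Hdata]).
    unfold data_loss in *. nra. }
  apply (Rmult_le_reg_r (t * R0)); [nra|].
  unfold fan_in_coeff, c0 in *. nra.
Qed.

End Minimizer.

Lemma fan_in_l1_lower_bound k : (S k <= L - 1)%nat ->
  exists kap, 0 < kap /\
    forall d W, d O = d0 -> d L = dL -> proper_B_local_min L sigma e D lam p B d W ->
      forall j, (j < d (S k))%nat -> kap <= sumR (d k) (fun i => Rabs (W (S k) i j)).
Proof.
  intros Hk. pose proof (fan_in_coeff_nonneg k).
  exists (lam / (fan_in_coeff k + 1)). split; [apply Rdiv_lt_0_compat; lra|].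
  intros d W Hd0 HdL [Hloc [HEB Hproper]] j Hj.
  assert (Hlam_le := lam_le_fan_in_coeff_mul d W HdL HEB Hd0 Hloc Hproper k j Hk Hj).
  assert (0 <= sumR (d k) (fun i => Rabs (W (S k) i j))) by (apply sumR_nonneg; intros; apply Rabs_pos).
  apply (Rmult_le_reg_r (fan_in_coeff k + 1)); [lra|].
  unfold Rdiv. rewrite Rmult_assoc, Rinv_l by lra. nra.
Qed.

Lemma hidden_width_bounded l : (l <= L - 1)%nat ->
  exists M, forall d, (exists W, d O = d0 /\ d L = dL /\ proper_B_local_min L sigma e D lam p B d W) ->
    (d l <= M)%nat.
Proof.
  induction l as [|l IH]; intros Hl.
  - exists d0. intros d [W [Hd0 _]]. lia.
  - destruct (IH ltac:(lia)) as [M HM].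
    destruct (fan_in_l1_lower_bound l Hl) as [kap [Hkap Hfan]].
    exists (natceil (INR M * rpow weight_radius p / rpow (kap / (INR M + 1)) p)).
    intros d [W [Hd0 [HdL Hmin]]].
    apply (layer_width_le (d l) (d (S l)) M (W (S l)) kap weight_radius p Hkap Hp).
    + apply HM. now exists W.
    + now apply Hfan.
    + intros i Hi. destruct Hmin as [_ [HEB _]]. apply (row_pnorm_le d W HdL HEB); [lia | exact Hi].
Qed.

End LocalMinimum.

Theorem lemma3 (Y : Type) (L d0 dL : nat) (sigma : nat -> R -> R)
  (b1 b2 : nat -> R -> R) (e : (nat -> R) -> Y -> R) (b3 : R -> R)
  (D : list ((nat -> R) * Y)) (lam p : R)
  (Hsig_ld : forall l, (1 <= l <= L)%nat -> forall s, exists a, left_deriv (sigma l) s a)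
  (Hsig_rd : forall l, (1 <= l <= L)%nat -> forall s, exists a, right_deriv (sigma l) s a)
  (Hb1_nn : forall l S, 0 <= S -> 0 <= b1 l S)
  (Hb2_nn : forall l S, 0 <= S -> 0 <= b2 l S)
  (Hb1 : forall l, (1 <= l <= L)%nat -> forall S s, 0 <= S -> Rabs s <= S ->
           Rabs (sigma l s) <= b1 l S * Rabs s)
  (Hb2 : forall l, (1 <= l <= L)%nat -> forall S s a, 0 <= S -> Rabs s <= S ->
           (left_deriv (sigma l) s a \/ right_deriv (sigma l) s a) -> Rabs a <= b2 l S)
  (He_nn : forall v y, vec dL v -> 0 <= e v y)
  (He_diff : forall v y, vec dL v -> exists g, frechet dL (fun u => e u y) v g)
  (He_b3 : forall S v y g, vec dL v -> e v y <= S ->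
           frechet dL (fun u => e u y) v g -> maxabs dL g <= b3 S)
  (Hdiff : forall l, (1 <= l <= L)%nat -> derivable (sigma l))
  (Hlam : 0 < lam) (Hp : 1 <= p) :
  forall B : R, exists M : nat,
    forall (d : nat -> nat) (W : nat -> nat -> nat -> R),
      d O = d0 -> d L = dL ->
      proper_B_local_min L sigma e D lam p B d W ->
      forall l, (1 <= l <= L - 1)%nat -> (d l <= M)%nat.
Proof.
  intros B.
  destruct (uniform_bound_upto
              (fun d => exists W, d O = d0 /\ d L = dL /\ proper_B_local_min L sigma e D lam p B d W)
              (L - 1)) as [M HM].
  { apply (hidden_width_bounded Y L d0 dL sigma b1 b2 e b3 D lam p B
             Hb1_nn Hb2_nn Hb1 Hb2 He_nn He_diff He_b3 Hdiff Hlam ltac:(lra)). }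
  exists M. intros d W Hd0 HdL Hmin l Hl.
  apply HM; [now exists W | lia].
Qed.
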